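(* Let $\alpha_0,\alpha_1,\alpha_2\in\mathbb{C}$ with $\alpha_0+\alpha_1+\alpha_2=3$, and let $\tau_0,\tau_1,\tau_2$ be nonvanishing (meromorphic) functions of $x$. Define $$f_i=\frac{\tau_{i+1}'}{\tau_{i+1}}-\frac{\tau_{i+2}'}{\tau_{i+2}}+x\quad(i=0,1,2),\qquad g=\frac{\tau_0'}{\tau_0}+\frac{\tau_1'}{\tau_1}+\frac{\tau_2'}{\tau_2}.$$ Then $(f_0,f_1,f_2)$ satisfies $f_i'+f_i(f_{i+1}-f_{i+2})=\alpha_i$ for $i=0,1,2$ (with $f_0+f_1+f_2=3x$) and $g$ satisfies $2g'+(f_0-x)^2+(f_1-x)^2+(f_2-x)^2=0$ if and only if $$\Big(D_x^2-xD_x-\frac{\alpha_i-\alpha_{i+1}}{3}\Big)\,\tau_i\cdot\tau_{i+1}=0\qquad(i=0,1,2).$$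
   Context: Indices are taken modulo 3 and $'=d/dx$. Hirota's bilinear operators are defined by $P(D_x)\,F\cdot G=P(\partial_y)\big(F(x+y)G(x-y)\big)\big|_{y=0}$ for a constant-coefficient polynomial $P$; thus $D_xF\cdot G=F'G-FG'$ and $D_x^2F\cdot G=F''G-2F'G'+FG''$. *)

(* with mathcomp-real-closed's complex numbers R[i]
   (R a realType from mathcomp-analysis, so R[i] is the field of complex numbers). *)
From HB Require Import structures.
From mathcomp Require Import all_boot all_order all_algebra.
From mathcomp Require Import complex.
From mathcomp Require Import reals.
Set Implicit Arguments. Unset Strict Implicit. Unset Printing Implicit Defensive.
Import Order.TTheory GRing.Theory Num.Theory.
Local Open Scope ring_scope.

(* A C-linear derivation  ' = d/dx  on a commutative C-algebra K of functions
   (e.g. the field of meromorphic functions on a domain). *)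
Definition is_derivation (C : nzRingType) (K : comUnitAlgType C) (d : K -> K) : Prop :=
  [/\ forall f g : K, d (f + g) = d f + d g,
      forall f g : K, d (f * g) = d f * g + f * d g
    & forall c : C, d (c%:A) = 0].

Definition hirotaD1 (C : nzRingType) (K : comUnitAlgType C) (d : K -> K) (F G : K) : K :=
  d F * G - F * d G.
Definition hirotaD2 (C : nzRingType) (K : comUnitAlgType C) (d : K -> K) (F G : K) : K :=
  d (d F) * G - 2 * (d F * d G) + F * d (d G).

From HB Require Import structures.
From mathcomp Require Import all_boot all_order all_algebra.
From mathcomp Require Import complex.
From mathcomp Require Import reals.
From mathcomp Require Import ring.
Import Order.TTheory GRing.Theory Num.Theory.
Local Open Scope ring_scope.
Set Implicit Arguments. Unset Strict Implicit. Unset Printing Implicit Defensive.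

(* With [h_i = tau_i'/tau_i] and [k_i = h_i'], dividing the i-th bilinear
   equation by [tau_i tau_(i+1)] turns it into the vanishing of
   [E_i = k_i + k_(i+1) + (h_i - h_(i+1))^2 - x (h_i - h_(i+1))
          - (alpha_i - alpha_(i+1))/3].
   The symmetric form of Painleve IV and the equation for [g] are then linear
   in the [E_i]: the i-th equation of the system is [E_i - E_(i+2) = 0] and the
   equation for [g] is [E_0 + E_1 + E_2 = 0].  Since 3 is invertible, this
   linear system is equivalent to [E_0 = E_1 = E_2 = 0]. *)

Section Derivation.

Variables (C : nzRingType) (K : comUnitAlgType C) (d : K -> K).
Hypothesis derivation_d : is_derivation d.

Definition logderiv (F : K) : K := d F / F.

Lemma derivationD (F G : K) : d (F + G) = d F + d G.
Proof. by case: derivation_d. Qed.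

Lemma derivationM (F G : K) : d (F * G) = d F * G + F * d G.
Proof. by case: derivation_d. Qed.

Lemma derivationN (F : K) : d (- F) = - d F.
Proof.
have d0 : d 0 = 0 by apply: (@addrI _ (d 0)); rewrite -derivationD !addr0.
by apply/eqP; rewrite -addr_eq0 -derivationD addNr d0.
Qed.

Lemma derivationB (F G : K) : d (F - G) = d F - d G.
Proof. by rewrite derivationD derivationN. Qed.

Lemma derivation_logderiv (F : K) : F \is a GRing.unit -> d F = logderiv F * F.
Proof. by move=> uF; rewrite /logderiv mulrVK. Qed.

Lemma derivation2_logderiv (F : K) : F \is a GRing.unit ->
  d (d F) = (d (logderiv F) + logderiv F ^+ 2) * F.
Proof.
move=> uF; rewrite {1}(derivation_logderiv uF) derivationM (derivation_logderiv uF).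
by rewrite expr2 mulrDl mulrA.
Qed.

Lemma hirota_bilinear_logderiv (F G x c : K) :
    F \is a GRing.unit -> G \is a GRing.unit ->
  hirotaD2 d F G - x * hirotaD1 d F G - c * (F * G) =
  (F * G) * (d (logderiv F) + d (logderiv G) + (logderiv F - logderiv G) ^+ 2
             - x * (logderiv F - logderiv G) - c).
Proof.
move=> uF uG; rewrite /hirotaD2 /hirotaD1 !derivation2_logderiv //.
by rewrite (derivation_logderiv uF) (derivation_logderiv uG); ring.
Qed.

Lemma hirota_bilinear_eq0 (F G x c : K) :
    F \is a GRing.unit -> G \is a GRing.unit ->
  hirotaD2 d F G - x * hirotaD1 d F G - c * (F * G) = 0 <->
  d (logderiv F) + d (logderiv G) + (logderiv F - logderiv G) ^+ 2
    - x * (logderiv F - logderiv G) - c = 0.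
Proof.
move=> uF uG; rewrite hirota_bilinear_logderiv //; split=> [eq0|->]; last exact: mulr0.
have uFG : F * G \is a GRing.unit by rewrite unitrM uF.
by apply: (mulrI uFG); rewrite eq0 mulr0.
Qed.

End Derivation.

Lemma forall_ord3 (P : 'I_3 -> Prop) : (forall i, P i) <-> [/\ P 0, P 1 & P 2].
Proof.
split=> [P_ | [P0 P1 P2] [[|[|[|//]]] lti]]; first by split; apply: P_.
- by rewrite (_ : Ordinal lti = 0) //; apply: val_inj.
- by rewrite (_ : Ordinal lti = 1) //; apply: val_inj.
- by rewrite (_ : Ordinal lti = 2) //; apply: val_inj.
Qed.

Lemma ord3_add11 : 1 + 1 = 2 :> 'I_3. Proof. exact: val_inj. Qed.
Lemma ord3_add12 : 1 + 2 = 0 :> 'I_3. Proof. exact: val_inj. Qed.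
Lemma ord3_add21 : 2 + 1 = 0 :> 'I_3. Proof. exact: val_inj. Qed.
Lemma ord3_add22 : 2 + 2 = 1 :> 'I_3. Proof. exact: val_inj. Qed.

Lemma cyclic_system_eq0 (K : unitRingType) (E : 'I_3 -> K) :
    (3 : K) \is a GRing.unit ->
  (forall i, E i = E (i + 2)) /\ E 0 + E 1 + E 2 = 0 <-> forall i, E i = 0.
Proof.
move=> u3; split=> [[/forall_ord3[E02 E10 _] sumE] | E0]; last first.
  by split=> [i|]; rewrite !E0 ?addr0.
rewrite add0r in E02; rewrite ord3_add12 in E10.
have {}E0 : E 0 = 0.
  apply: (mulrI u3); rewrite mulr0 -sumE E10 -E02 mulr_natl.
  by rewrite !mulrS mulr0n addr0 addrA.
by apply/forall_ord3; rewrite E10 -E02 E0.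
Qed.

Lemma eq_iff_subr (V : zmodType) (a b a' b' : V) :
  a - b = a' - b' -> (a = b <-> a' = b').
Proof.
move=> e; split=> eq_ab; apply/subr0_eq; first by rewrite -e eq_ab subrr.
by rewrite e eq_ab subrr.
Qed.

Lemma scale_sum3_third (F : numFieldType) (A : lalgType F) (a : 'I_3 -> F) :
  a 0 + a 1 + a 2 = 3 -> (a 0 / 3)%:A + (a 1 / 3)%:A + (a 2 / 3)%:A = 1 :> A.
Proof.
move=> sum_a; rewrite -!scalerDl -!mulrDl sum_a divff ?scale1r //.
by rewrite pnatr_eq0.
Qed.

Lemma scale_mul3_third (F : numFieldType) (A : lalgType F) (a : F) :
  a%:A = 3 * (a / 3)%:A :> A.
Proof. by rewrite mulr_natl scalerMnl -mulr_natr divfK // pnatr_eq0. Qed.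

Lemma natr_alg_unit (F : numFieldType) (A : unitAlgType F) (n : nat) :
  (n.+1%:R : A) \is a GRing.unit.
Proof. by rewrite -(rmorph_nat (in_alg A)) rmorph_unit // unitfE pnatr_eq0. Qed.

Section SymmetricForm.

Variables (K : comNzRingType) (x : K) (h k c : 'I_3 -> K).

Definition symmetric_var (i : 'I_3) : K := h (i + 1) - h (i + 2) + x.

Definition bilinear_ratio (i : 'I_3) : K :=
  k i + k (i + 1) + (h i - h (i + 1)) ^+ 2 - x * (h i - h (i + 1)) - (c i - c (i + 1)).

Hypothesis sum_c : c 0 + c 1 + c 2 = 1.

Lemma symmetric_form_bilinear_ratio (i : 'I_3) :
  k (i + 1) - k (i + 2) + 1
    + symmetric_var i * (symmetric_var (i + 1) - symmetric_var (i + 2)) - 3 * c i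
  = bilinear_ratio i - bilinear_ratio (i + 2).
Proof.
have c2 : c 2 = 1 - c 0 - c 1 by rewrite -sum_c; ring.
move: i; apply/forall_ord3; rewrite /symmetric_var /bilinear_ratio.
by rewrite !(add0r, ord3_add11, ord3_add12, ord3_add21, ord3_add22) c2; split; ring.
Qed.

Lemma hamiltonian_bilinear_ratio :
  2 * (k 0 + k 1 + k 2) + ((symmetric_var 0 - x) ^+ 2 + (symmetric_var 1 - x) ^+ 2
                           + (symmetric_var 2 - x) ^+ 2)
  = bilinear_ratio 0 + bilinear_ratio 1 + bilinear_ratio 2.
Proof.
rewrite /symmetric_var /bilinear_ratio.
by rewrite !(add0r, ord3_add11, ord3_add12, ord3_add21, ord3_add22); ring.
Qed.

End SymmetricForm.

Theorem theorem3p1 (R : realType) (K : comUnitAlgType R[i]) (d : K -> K) (x : K)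
    (alpha : 'I_3 -> R[i]) (tau : 'I_3 -> K) :
  is_derivation d ->
  d x = 1 ->
  (forall i, tau i \is a GRing.unit) ->
  alpha 0 + alpha 1 + alpha 2 = 3 ->
  let h := fun i : 'I_3 => d (tau i) / tau i in
  let f := fun i : 'I_3 => h (i + 1) - h (i + 2) + x in
  let g := h 0 + h 1 + h 2 in
  ((forall i : 'I_3, d (f i) + f i * (f (i + 1) - f (i + 2)) = (alpha i)%:A)
   /\ 2 * d g + ((f 0 - x) ^+ 2 + (f 1 - x) ^+ 2 + (f 2 - x) ^+ 2) = 0)
  <->
  (forall i : 'I_3,
     hirotaD2 d (tau i) (tau (i + 1)) - x * hirotaD1 d (tau i) (tau (i + 1))
     - ((alpha i - alpha (i + 1)) / 3)%:A * (tau i * tau (i + 1)) = 0).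
Proof.
move=> derivation_d dx unit_tau sum_alpha h f g.
pose k i := d (h i).
pose c i : K := (alpha i / 3)%:A.
pose E := bilinear_ratio x h k c.
have sum_c : c 0 + c 1 + c 2 = 1 by apply: scale_sum3_third.
have symE i :
    d (f i) + f i * (f (i + 1) - f (i + 2)) = (alpha i)%:A <-> E i = E (i + 2).
  apply: eq_iff_subr; rewrite scale_mul3_third.
  rewrite {1}/f (derivationD derivation_d) (derivationB derivation_d) dx.
  exact: symmetric_form_bilinear_ratio.
have hamE :
    2 * d g + ((f 0 - x) ^+ 2 + (f 1 - x) ^+ 2 + (f 2 - x) ^+ 2) = E 0 + E 1 + E 2.
  by rewrite /g !(derivationD derivation_d); apply: hamiltonian_bilinear_ratio.
have unit3 : (3 : K) \is a GRing.unit := natr_alg_unit K 2.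
rewrite hamE; apply: (iff_trans _ (iff_trans (cyclic_system_eq0 E unit3) _)).
  by split=> -[eqs ->]; split=> // i; apply/symE/eqs.
have hirotaE i := hirota_bilinear_eq0 derivation_d x (c i - c (i + 1))
                                      (unit_tau i) (unit_tau (i + 1)).
split=> eq0 i; first by rewrite mulrBl scalerBl; apply/hirotaE/eq0.
by apply/hirotaE; rewrite -scalerBl -mulrBl; apply: eq0.
Qed.
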